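(* For all $\theta,\theta'\in\Theta$ and $x\in\mathsf X$, $$\|P^\rho_\theta(x,\cdot)-P^\rho_{\theta'}(x,\cdot)\|_{TV}\le 4\sup_{i\in\{1,\dots,d\}}\Big|1-\frac{\rho(\theta'(i))}{\rho(\theta(i))}\Big|.$$
   Context: Let $\mathsf X\subset\mathbb R^D$ be measurable, $\lambda$ a nonnegative reference measure, $\pi$ a probability density on $\mathsf X$ w.r.t. $\lambda$. $\mathsf X=\bigcup_{i=1}^d\mathsf X_i$ is a partition into disjoint measurable strata, $\theta_\star(i)=\int_{\mathsf X_i}\pi\,d\lambda$, $\Theta=\{\theta\in(0,1)^d:\sum_i\theta(i)=1\}$. For a measurable $\rho:(0,1)\to(0,\infty)$ and $\theta\in\Theta$, $\pi^\rho_\theta(x)=(Z^\rho_\theta)^{-1}\sum_{i}\frac{\pi(x)}{\rho(\theta(i))}\mathbf 1_{\mathsf X_i}(x)$, $Z^\rho_\theta=\sum_i\frac{\theta_\star(i)}{\rho(\theta(i))}$. $P^\rho_\theta$ is the Metropolis–Hastings kernel with symmetric proposal density $q(x,y)$ w.r.t. $\lambda$ and target $\pi^\rho_\theta\,d\lambda$: $P^\rho_\theta f(x)=\int q(x,y)\alpha_\theta(x,y)f(y)\lambda(dy)+\big(1-\int q(x,y)\alpha_\theta(x,y)\lambda(dy)\big)f(x)$ with $\alpha_\theta(x,y)=1\wedge\frac{\pi^\rho_\theta(y)}{\pi^\rho_\theta(x)}$. For a signed measure $\nu$, $\|\nu\|_{TV}=\sup\{|\nu(f)|:\sup_{\mathsf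 X}|f|\le1\}$. *)

From HB Require Import structures.
From mathcomp Require Import all_boot all_order all_algebra.
From mathcomp Require Import all_classical all_reals all_analysis.
Set Implicit Arguments. Unset Strict Implicit. Unset Printing Implicit Defensive.
Import Order.TTheory GRing.Theory Num.Theory.
Local Open Scope classical_set_scope.
Local Open Scope ring_scope.

Section MH.
Context {dT : measure_display} {T : measurableType dT} {R : realType}.
Variables (mu : {measure set T -> \bar R}) (X : set T) (d : nat)
  (Xs : 'I_d -> set T) (pi : T -> R) (rho : R -> R) (q : T -> T -> R).

Definition theta_star (i : 'I_d) : R := Rintegral mu (Xs i) pi.

Definition Zrho (theta : 'I_d -> R) : R :=
  \sum_(i < d) theta_star i / rho (theta i).

Definition pi_rho (theta : 'I_d -> R) (x : T) : R :=
  (Zrho theta)^-1 *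
  \sum_(i < d) pi x / rho (theta i) * (\1_(Xs i) x : R).

Definition alpha (theta : 'I_d -> R) (x y : T) : R :=
  Num.min 1 (pi_rho theta y / pi_rho theta x).

Definition MH (theta : 'I_d -> R) (f : T -> R) (x : T) : R :=
  Rintegral mu X (fun y => q x y * alpha theta x y * f y)
  + (1 - Rintegral mu X (fun y => q x y * alpha theta x y)) * f x.

(* || P_theta(x,.) - P_theta'(x,.) ||_TV, as sup over measurable |f| <= 1 *)
Definition tv_MH (theta theta' : 'I_d -> R) (x : T) : \bar R :=
  ereal_sup [set (`|MH theta f x - MH theta' f x|)%:E | f in
    [set f : T -> R | measurable_fun X f /\ (forall y, X y -> `|f y| <= 1)]].

End MH.

Definition in_Theta {R : realType} (d : nat) (theta : 'I_d -> R) : Prop :=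
  (forall i, 0 < theta i < 1) /\ \sum_(i < d) theta i = 1.

From HB Require Import structures.
From mathcomp Require Import all_boot all_order all_algebra.
From mathcomp Require Import all_classical all_reals all_analysis.
From mathcomp Require Import ring lra measurable_realfun.
Set Implicit Arguments. Unset Strict Implicit. Unset Printing Implicit Defensive.
Import Order.TTheory GRing.Theory Num.Theory.
Local Open Scope classical_set_scope.
Local Open Scope ring_scope.

(* On the stratum of [y] the biased target is [pi y / rho (theta j)] up to the
   normalising constant, which cancels in the Metropolis ratio.  Hence the ratios
   for [theta] and [theta'] differ by the factors [rho (theta' i) / rho (theta i)]
   attached to the strata of the two endpoints, and since
   [|min(1, s) - min(1, c s)| <= |1 - c|] the acceptance probabilities differ by at
   most [2 e], where [e] bounds every [|1 - rho (theta' i) / rho (theta i)|].  Writing [P_theta f x = f x + \int q(x,y) alpha_theta(x,y) (f y - f x)],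
   the difference of the two kernels integrates
   [q(x,y) (alpha_theta - alpha_theta')(x,y) (f y - f x)], which is at most
   [2 e * 2 * q(x,y)] in absolute value; [q(x,.)] being a probability density
   gives [4 e]. *)

Lemma dist_min1_scale (R : realFieldType) (s c : R) : 0 <= s -> 0 < c ->
  `|Num.min 1 s - Num.min 1 (c * s)| <= `|1 - c|.
Proof.
move=> s0 c0.
have [c1|c1] := leP c 1;
  [rewrite [`|1 - c|]ger0_norm ?subr_ge0 // | rewrite [`|1 - c|]ltr0_norm ?subr_lt0 //];
  have [s1|s1] := leP s 1; have [cs1|cs1] := leP (c * s) 1;
  rewrite ?(min_r s1) ?(min_l (ltW s1)) ?(min_r cs1) ?(min_l (ltW cs1)) ler_norml;
  apply/andP; split; nra.
Qed.

Lemma sum_mul_indic_partition (R : pzRingType) (T : Type) (I : finType)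
  (A : I -> set T) (F : I -> R) (j : I) (y : T) :
  (forall i k, i != k -> A i `&` A k = set0) -> A j y ->
  \sum_i F i * (\1_(A i) y : R) = F j.
Proof.
move=> disjA Ajy; rewrite (bigD1 j) //= indicE mem_set // mulr1 big1 ?addr0 // => i ij.
rewrite indicE memNset ?mulr0 // => Aiy.
by have : (A i `&` A j) y by []; rewrite disjA.
Qed.

Section dominated_by_density.
Context {dT : measure_display} {T : measurableType dT} {R : realType}.
Variables (mu : {measure set T -> \bar R}) (D : set T) (g : T -> R).
Hypotheses (mD : measurable D) (mg : measurable_fun D g)
  (g_ge0 : forall y, D y -> 0 <= g y) (g_int1 : (\int[mu]_(y in D) (g y)%:E = 1)%E).

Lemma integrable_dominated (h : T -> R) (c : R) : 0 <= c -> measurable_fun D h ->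
  (forall y, D y -> `|h y| <= c * g y) -> mu.-integrable D (EFin \o h).
Proof.
move=> c0 mh hb; apply/integrableP; split; first exact/measurable_EFinP.
apply: (@le_lt_trans _ _ (c%:E * \int[mu]_(y in D) (g y)%:E)%E); last first.
  by rewrite g_int1 mule1 ltry.
rewrite -ge0_integralZl_EFin //; last exact/measurable_EFinP.
apply: ge0_le_integral => //.
- by apply: measurableT_comp => //; exact/measurable_EFinP.
- by apply: measurable_funeM; exact/measurable_EFinP.
Qed.

Lemma normr_Rintegral_dominated (h : T -> R) (c : R) : 0 <= c -> measurable_fun D h ->
  (forall y, D y -> `|h y| <= c * g y) -> `|\int[mu]_(y in D) h y| <= c.
Proof.
move=> c0 mh hb.
have ig : mu.-integrable D (EFin \o g).
  by apply: (integrable_dominated ler01) => // y Dy; rewrite mul1r ger0_norm ?g_ge0.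
have icg : mu.-integrable D (EFin \o (fun y => c * g y)).
  apply: (integrable_dominated c0) => [|y Dy]; first exact: measurable_funM.
  by rewrite ger0_norm ?mulr_ge0 ?g_ge0.
apply: (le_trans (le_normr_Rintegral mD (integrable_dominated c0 mh hb))).
apply: (le_trans (le_Rintegral mD (integrable_norm _) icg hb)).
  exact: integrable_dominated c0 mh hb.
by rewrite RintegralZl // /Rintegral g_int1 mulr1.
Qed.

End dominated_by_density.

Section metropolis_hastings.
Context {dT : measure_display} {T : measurableType dT} {R : realType}.
Variables (mu : {measure set T -> \bar R}) (X : set T) (d : nat)
  (Xs : 'I_d -> set T) (pi : T -> R) (rho : R -> R) (q : T -> T -> R).
Hypotheses (mX : measurable X) (mXs : forall i, measurable (Xs i))
  (subXs : forall i, Xs i `<=` X)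
  (disjXs : forall i j, i != j -> Xs i `&` Xs j = set0)
  (covXs : \bigcup_(i in [set: 'I_d]) Xs i = X)
  (mpi : measurable_fun X pi) (pi_ge0 : forall x, X x -> 0 <= pi x)
  (pi_int : (\int[mu]_(x in X) (pi x)%:E = 1)%E)
  (q_ge0 : forall x y, 0 <= q x y) (mq : forall x, measurable_fun X (q x))
  (q_int : forall x, X x -> (\int[mu]_(y in X) (q x y)%:E = 1)%E).

Local Notation theta_star := (theta_star mu Xs pi).
Local Notation Zrho := (Zrho mu Xs pi rho).
Local Notation pi_rho := (pi_rho mu Xs pi rho).
Local Notation alpha := (alpha mu Xs pi rho).
Local Notation MH := (MH mu X Xs pi rho q).

Lemma exists_stratum x : X x -> exists i, Xs i x.
Proof. by rewrite -covXs => -[i _ Xix]; exists i. Qed.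

Lemma theta_star_ge0 i : 0 <= theta_star i.
Proof. by apply: Rintegral_ge0 => y /subXs /pi_ge0. Qed.

Lemma sum_theta_star : \sum_(i < d) theta_star i = 1.
Proof.
have XE : X = \big[setU/set0]_(i <- index_enum 'I_d) Xs i.
  rewrite -bigcup_seq -covXs; apply/seteqP.
  by split=> y [i _ Xiy]; exists i => //=; rewrite mem_index_enum.
have trivXs : trivIset [set` index_enum 'I_d] Xs.
  move=> i j _ _ [y [Xiy Xjy]]; apply/eqP; apply: contraT => ij.
  by have : (Xs i `&` Xs j) y by []; rewrite disjXs.
have int_fin i : (\int[mu]_(x in Xs i) (pi x)%:E)%E \is a fin_num.
  rewrite ge0_fin_numE; last by apply: integral_ge0 => y /subXs /pi_ge0; rewrite lee_fin.
  apply: le_lt_trans (ltry 1); rewrite -pi_int.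
  by apply: ge0_subset_integral => //; exact/measurable_EFinP.
rewrite /theta_star /Rintegral sum_fine => [|i _]; last exact: int_fin.
rewrite -ge0_integral_bigsetU ?index_enum_uniq //= -XE ?pi_int //.
exact/measurable_EFinP.
Qed.

Section fixed_theta.
Variable theta : 'I_d -> R.
Hypothesis rho_theta_gt0 : forall i, 0 < rho (theta i).

Lemma Zrho_gt0 : 0 < Zrho theta.
Proof.
have summand_ge0 i : true -> 0 <= theta_star i / rho (theta i).
  by move=> _; rewrite divr_ge0 ?theta_star_ge0 ?ltW.
rewrite lt_neqAle sumr_ge0 // andbT eq_sym; apply/negP => /eqP /(psumr_eq0P summand_ge0) H.
suff : \sum_(i < d) theta_star i = 0 by rewrite sum_theta_star => /eqP; rewrite oner_eq0.
apply: big1 => i _; have /eqP := H i isT.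
by rewrite mulf_eq0 invr_eq0 (gt_eqF (rho_theta_gt0 i)) orbF => /eqP.
Qed.

Lemma pi_rho_ge0 y : 0 <= pi_rho theta y.
Proof.
rewrite /pi_rho mulr_ge0 ?invr_ge0 ?(ltW Zrho_gt0) // sumr_ge0 // => i _.
rewrite indicE; have [/set_mem Xiy|] := boolP (y \in Xs i); last by rewrite mulr0.
by rewrite mulr1 divr_ge0 ?pi_ge0 ?(ltW (rho_theta_gt0 i)) //; exact: subXs Xiy.
Qed.

Lemma pi_rho_stratum j y : Xs j y ->
  pi_rho theta y = (Zrho theta)^-1 * (pi y / rho (theta j)).
Proof.
by move=> Xjy; rewrite /pi_rho (sum_mul_indic_partition (fun i => pi y / rho (theta i)) disjXs Xjy).
Qed.

Lemma alpha_stratum i j x y : Xs i x -> Xs j y ->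
  alpha theta x y = Num.min 1 (pi y / pi x * (rho (theta i) / rho (theta j))).
Proof.
move=> Xix Xjy; rewrite /alpha (pi_rho_stratum Xix) (pi_rho_stratum Xjy).
congr (Num.min 1 _).
rewrite [in LHS]invfM invrK mulrACA mulVf ?gt_eqF ?Zrho_gt0 // mul1r invfM invrK.
by ring.
Qed.

Lemma alpha_ge0 x y : 0 <= alpha theta x y.
Proof. by rewrite /alpha le_min ler01 divr_ge0 ?pi_rho_ge0. Qed.

Lemma alpha_le1 x y : alpha theta x y <= 1.
Proof. by rewrite /alpha ge_min lexx. Qed.

Lemma measurable_alpha x : measurable_fun X (alpha theta x).
Proof.
apply: measurable_minr; first exact: measurable_cst.
apply: measurable_funM => //; apply: measurable_funM; first exact: measurable_cst.
apply: measurable_sum => i; apply: measurable_funM; last exact: measurable_indic.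
by apply: measurable_funM => //; exact: measurable_cst.
Qed.

Definition accept_density x y := q x y * alpha theta x y.

Lemma accept_density_ge0 x y : 0 <= accept_density x y.
Proof. by rewrite mulr_ge0 ?alpha_ge0. Qed.

Lemma accept_density_le x y : accept_density x y <= q x y.
Proof. by rewrite ler_piMr ?alpha_le1. Qed.

Lemma measurable_accept_density x : measurable_fun X (accept_density x).
Proof. exact: measurable_funM (mq x) (measurable_alpha x). Qed.

Lemma integrable_accept_density x : X x ->
  mu.-integrable X (EFin \o accept_density x).
Proof.
move=> Xx; apply: (integrable_dominated mX (mq x) _ (q_int Xx) ler01) => //.
  exact: measurable_accept_density.
by move=> y _; rewrite mul1r ger0_norm ?accept_density_ge0 ?accept_density_le.
Qed.

Lemma integrable_accept_density_mul x (h : T -> R) (c : R) : X x -> 0 <= c ->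
  measurable_fun X h -> (forall y, X y -> `|h y| <= c) ->
  mu.-integrable X (EFin \o (fun y => accept_density x y * h y)).
Proof.
move=> Xx c0 mh hc; apply: (integrable_dominated mX (mq x) _ (q_int Xx) c0) => //.
  exact: measurable_funM (measurable_accept_density x) mh.
move=> y Xy; rewrite normrM ger0_norm ?accept_density_ge0 // mulrC.
by apply: ler_pM; rewrite ?accept_density_ge0 ?hc ?accept_density_le.
Qed.

Lemma MHE (f : T -> R) x : X x -> measurable_fun X f -> (forall y, X y -> `|f y| <= 1) ->
  MH theta f x = f x + \int[mu]_(y in X) (accept_density x y * (f y - f x)).
Proof.
move=> Xx mf f1; have fx1 := f1 x Xx.
under eq_Rintegral do rewrite mulrBr.
rewrite RintegralB //; first last.
- by apply: integrable_accept_density_mul ler01 _ _ => //; exact: measurable_cst.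
- exact: integrable_accept_density_mul ler01 _ _.
rewrite RintegralZr ?integrable_accept_density // /MH.
by ring.
Qed.

End fixed_theta.

Section two_thetas.
Variables (theta theta' : 'I_d -> R) (e : R).
Hypotheses (rho_theta_gt0 : forall i, 0 < rho (theta i))
  (rho_theta'_gt0 : forall i, 0 < rho (theta' i))
  (rho_ratio_le : forall i, `|1 - rho (theta' i) / rho (theta i)| <= e).

Lemma dist_alpha x y : X x -> X y -> `|alpha theta x y - alpha theta' x y| <= 2 * e.
Proof.
move=> Xx Xy; have [i Xix] := exists_stratum Xx; have [j Xjy] := exists_stratum Xy.
rewrite (alpha_stratum rho_theta_gt0 Xix Xjy) (alpha_stratum rho_theta'_gt0 Xix Xjy).
set u := pi y / pi x; set a := rho (theta i); set b := rho (theta j).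
set a' := rho (theta' i); set b' := rho (theta' j).
have u0 : 0 <= u by rewrite divr_ge0 ?pi_ge0.
have [a0 b0] : 0 < a /\ 0 < b by split; apply: rho_theta_gt0.
have [a'0 b'0] : 0 < a' /\ 0 < b' by split; apply: rho_theta'_gt0.
(* The intermediate ratio [u * (a' / b)] is [a' / a] times the ratio for [theta]
   and [b' / b] times the ratio for [theta']. *)
have le1 : `|Num.min 1 (u * (a / b)) - Num.min 1 (u * (a' / b))| <= e.
  have -> : u * (a' / b) = a' / a * (u * (a / b)) by field; rewrite !gt_eqF.
  apply: le_trans (rho_ratio_le i); apply: dist_min1_scale.
    by rewrite mulr_ge0 // divr_ge0 // ltW.
  by rewrite divr_gt0.
have le2 : `|Num.min 1 (u * (a' / b)) - Num.min 1 (u * (a' / b'))| <= e.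
  have -> : u * (a' / b) = b' / b * (u * (a' / b')) by field; rewrite !gt_eqF.
  rewrite distrC; apply: le_trans (rho_ratio_le j); apply: dist_min1_scale.
    by rewrite mulr_ge0 // divr_ge0 // ltW.
  by rewrite divr_gt0.
by apply: le_trans (ler_distD (Num.min 1 (u * (a' / b))) _ _) _; lra.
Qed.

Lemma MHB (f : T -> R) x : X x -> measurable_fun X f -> (forall y, X y -> `|f y| <= 1) ->
  MH theta f x - MH theta' f x = \int[mu]_(y in X)
    ((accept_density theta x y - accept_density theta' x y) * (f y - f x)).
Proof.
move=> Xx mf f1; have mfx : measurable_fun X (fun y => f y - f x).
  by apply: measurable_funB mf _; exact: measurable_cst.
have fx2 y : X y -> `|f y - f x| <= 2.
  by move=> Xy; apply: le_trans (ler_normB _ _) _; have := f1 y Xy; have := f1 x Xx; lra.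
under eq_Rintegral do rewrite mulrBl.
rewrite RintegralB // ?(integrable_accept_density_mul _ Xx _ mfx fx2) //.
by rewrite (MHE rho_theta_gt0 Xx mf f1) (MHE rho_theta'_gt0 Xx mf f1); ring.
Qed.

Lemma dist_MH (f : T -> R) x : X x -> measurable_fun X f ->
  (forall y, X y -> `|f y| <= 1) -> `|MH theta f x - MH theta' f x| <= 4 * e.
Proof.
move=> Xx mf f1; rewrite MHB //.
have [i _] := exists_stratum Xx.
have e0 : 0 <= e := le_trans (normr_ge0 _) (rho_ratio_le i).
apply: (normr_Rintegral_dominated mX (mq x) _ (q_int Xx)) => //.
- by rewrite mulr_ge0.
- apply: measurable_funM; last by apply: measurable_funB mf _; exact: measurable_cst.
  exact: measurable_funB (measurable_accept_density _ _) (measurable_accept_density _ _).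
move=> y Xy; have fx2 : `|f y - f x| <= 2.
  by apply: le_trans (ler_normB _ _) _; have := f1 y Xy; have := f1 x Xx; lra.
rewrite /accept_density -mulrBr !normrM (ger0_norm (q_ge0 x y)).
rewrite -[X in X <= _]mulrA [X in X <= _]mulrC.
apply: ler_wpM2r; first exact: q_ge0.
by apply: le_trans (ler_pM _ _ (dist_alpha Xx Xy) fx2) _ => //; lra.
Qed.

End two_thetas.
End metropolis_hastings.

Theorem lemma6p3 (dT : measure_display) (T : measurableType dT) (R : realType)
  (mu : {measure set T -> \bar R}) (X : set T) (d : nat)
  (Xs : 'I_d -> set T) (pi : T -> R) (rho : R -> R) (q : T -> T -> R)
  (mX : measurable X)
  (mXs : forall i, measurable (Xs i))
  (subXs : forall i, Xs i `<=` X)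
  (disjXs : forall i j, i != j -> Xs i `&` Xs j = set0)
  (covXs : \bigcup_(i in [set: 'I_d]) Xs i = X)
  (mpi : measurable_fun X pi)
  (pi_ge0 : forall x, X x -> 0 <= pi x)
  (pi_int : (\int[mu]_(x in X) (pi x)%:E = 1)%E)
  (mrho : measurable_fun (`]0, 1[ : set R) rho)
  (rho_gt0 : forall t, 0 < t < 1 -> 0 < rho t)
  (q_sym : forall x y, q x y = q y x)
  (q_ge0 : forall x y, 0 <= q x y)
  (mq : forall x, measurable_fun X (q x))
  (q_int : forall x, X x -> (\int[mu]_(y in X) (q x y)%:E = 1)%E) :
  forall (theta theta' : 'I_d -> R), in_Theta theta -> in_Theta theta' ->
  forall x, X x ->
  (tv_MH mu X Xs pi rho q theta theta' x <=
    (4 * \big[Num.max/0]_(i < d) `|1 - rho (theta' i) / rho (theta i)|)%:E)%E.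
Proof.
move=> theta theta' [theta01 _] [theta'01 _] x Xx.
apply: ge_ereal_sup => _ [f [mf f1] <-]; rewrite lee_fin.
apply: dist_MH => // i; [exact/rho_gt0/theta01 | exact/rho_gt0/theta'01 | exact: le_bigmax].
Qed.
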